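(* Let $K\subseteq\mathbb{C}$ be a field, $e\ge2$, and $f,g:\mathbb{Z}/e\mathbb{Z}\to\mathbb{C}$. Assume there exist $A=[a_{i,j}]$, $B=[b_{i,j}]\in M_e(K)$ (indices modulo $e$; write $A[i,j]=a_{i,j}$) such that for all $i,j$, \[ f(i)f(j)=\sum_{k=0}^{e-1}a_{j-i,k-i}f(k)\quad\text{and}\quad g(i)g(j)=\sum_{k=0}^{e-1}b_{j-i,k-i}g(k). \] Then for every $d\in(\mathbb{Z}/e\mathbb{Z})\setminus\{0\}$ and all $i,j$, \[ (f\overset{d}{\ast}g)(i)\,(f\overset{d}{\ast}g)(j)=\sum_{k=0}^{e-1}(A\overset{d}{\ast}B)[j-i,k-i]\,(f\overset{d}{\ast}g)(k). \] In particular, for every $n\ge1$ and all $i,j$, $f^{(n)}(i)f^{(n)}(j)=\sum_{k=0}^{e-1}A^{(n)}[j-i,k-i]\,f^{(n)}(k)$.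
   Context: For functions $f,g:\mathbb{Z}/e\mathbb{Z}\to\mathbb{C}$ and $d\in(\mathbb{Z}/e\mathbb{Z})\setminus\{0\}$, $(f\overset{d}{\ast}g)(i)=\sum_{s=0}^{e-1}f(s)g(ds+i)$; $f^{(n)}$ is the $n$-fold product $f\overset{-1}{\ast}\cdots\overset{-1}{\ast}f$, i.e. $f^{(n)}(i)=\sum_{k_1+\cdots+k_n\equiv i\ (\mathrm{mod}\ e)}f(k_1)\cdots f(k_n)$. For matrices $A=[a_{i,j}],B=[b_{i,j}]\in M_e(K)$, $A\overset{d}{\ast}B=\big[\sum_{s,t=0}^{e-1}a_{s,t}b_{ds+i,dt+j}\big]_{0\le i,j\le e-1}$, and $A^{(n)}=A\overset{-1}{\ast}\cdots\overset{-1}{\ast}A$ ($n$ factors; the $(-1)$-composition is associative). *)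

From HB Require Import structures.
From mathcomp Require Import all_boot all_order all_algebra.
From mathcomp Require Import reals complex.
Set Implicit Arguments. Unset Strict Implicit. Unset Printing Implicit Defensive.
Import Order.TTheory GRing.Theory Num.Theory.
Local Open Scope ring_scope.

(* Z/eZ is 'Z_e (= 'I_((Zp_trunc e).+2), correct for e >= 2);
   matrices in M_e(C) are indexed by Z/eZ, i.e. 'M[C]_((Zp_trunc e).+2). *)

Section Conv.
Variable (C : pzRingType) (e : nat).

Definition fconv (d : 'Z_e) (f g : 'Z_e -> C) : 'Z_e -> C :=
  fun i => \sum_(s : 'Z_e) f s * g (d * s + i).

Definition mconv (d : 'Z_e) (A B : 'M[C]_((Zp_trunc e).+2)) : 'M[C]_((Zp_trunc e).+2) :=
  \matrix_(i, j) \sum_(s : 'Z_e) \sum_(t : 'Z_e) A s t * B (d * s + i) (d * t + j).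

(* fpow_aux n f = f^{(n+1)} = f *_{-1} (f *_{-1} ( ... f)) *)
Fixpoint fpow_aux (n : nat) (f : 'Z_e -> C) : 'Z_e -> C :=
  match n with 0 => f | n'.+1 => fconv (-1) f (fpow_aux n' f) end.
Definition fpow (n : nat) (f : 'Z_e -> C) := fpow_aux n.-1 f.

Fixpoint mpow_aux (n : nat) (A : 'M[C]_((Zp_trunc e).+2)) :=
  match n with 0 => A | n'.+1 => mconv (-1) A (mpow_aux n' A) end.
Definition mpow (n : nat) A := mpow_aux n.-1 A.
End Conv.

From HB Require Import structures.
From mathcomp Require Import all_boot all_order all_algebra.
From mathcomp Require Import reals complex.
From mathcomp Require Import ring.
Set Implicit Arguments. Unset Strict Implicit. Unset Printing Implicit Defensive.
Import Order.TTheory GRing.Theory Num.Theory.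
Local Open Scope ring_scope.

(* Multiply out (f *_d g)(i) (f *_d g)(j) as a sum over s, t of
   f(s) f(t) g(ds + i) g(dt + j), expand both products with the structure
   matrices and collect the coefficient of f(k) g(l); the substitution
   s = k - v, t = s + u turns that coefficient into (A *_d B)[j - i, l - dk - i],
   which is the coefficient of f(k) g(l) on the right-hand side.  Nothing uses
   that the entries lie in K or that d != 0: the identity is a formal
   consequence of the two hypotheses over any commutative ring. *)

Section StructureMatrix.
Variables (C : comNzRingType) (e : nat).
Local Notation Mx := 'M[C]_((Zp_trunc e).+2).

Definition structure_mx (A : Mx) (f : 'Z_e -> C) : Prop :=
  forall i j : 'Z_e, f i * f j = \sum_(k : 'Z_e) A (j - i) (k - i) * f k.

Variables (d : 'Z_e) (A B : Mx) (f g : 'Z_e -> C).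

Lemma mconv_shiftE (i j k l : 'Z_e) :
  mconv d A B (j - i) (l - d * k - i) =
  \sum_(s : 'Z_e) \sum_(t : 'Z_e)
     A (t - s) (k - s) * B (d * (t - s) + (j - i)) (l - (d * s + i)).
Proof.
rewrite mxE exchange_big [RHS](reindex_inj (addrI k)) [RHS](reindex_inj oppr_inj) /=.
apply: eq_bigr => v _; rewrite [RHS](reindex_inj (addrI (k - v))) /=.
apply: eq_bigr => u _.
have -> : k - v + u - (k - v) = u by ring.
have -> : k - (k - v) = v by ring.
by have -> : l - (d * (k - v) + i) = d * v + (l - d * k - i) by ring.
Qed.

Lemma sum_mul_fconv (c : 'Z_e -> C) :
  \sum_(m : 'Z_e) c m * fconv d f g m =
  \sum_(k : 'Z_e) \sum_(l : 'Z_e) c (l - d * k) * (f k * g l).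
Proof.
under eq_bigr => m _ do rewrite /fconv mulr_sumr.
rewrite exchange_big /=; apply: eq_bigr => k _.
rewrite (reindex_inj (addrI (- (d * k)))) /=; apply: eq_bigr => l _.
by rewrite addrA subrr add0r addrC mulrCA.
Qed.

Lemma fconv_structure :
  structure_mx A f -> structure_mx B g -> structure_mx (mconv d A B) (fconv d f g).
Proof.
move=> hf hg i j.
have expand_pair (s t : 'Z_e) :
    f s * g (d * s + i) * (f t * g (d * t + j)) =
    \sum_(k : 'Z_e) \sum_(l : 'Z_e)
      A (t - s) (k - s) * B (d * (t - s) + (j - i)) (l - (d * s + i)) * (f k * g l).
  rewrite mulrACA hf hg big_distrl /=; apply: eq_bigr => k _.
  rewrite big_distrr /=; apply: eq_bigr => l _.
  have -> : d * t + j - (d * s + i) = d * (t - s) + (j - i) by ring.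
  ring.
rewrite sum_mul_fconv /fconv mulr_suml.
under eq_bigr => s _ do rewrite mulr_sumr.
under eq_bigr => s _ do under eq_bigr => t _ do rewrite expand_pair.
under eq_bigr => s _ do rewrite exchange_big /=.
rewrite exchange_big /=; apply: eq_bigr => k _.
under eq_bigr => s _ do rewrite exchange_big /=.
rewrite exchange_big /=; apply: eq_bigr => l _.
rewrite mconv_shiftE mulr_suml.
by under [RHS]eq_bigr do rewrite mulr_suml.
Qed.

End StructureMatrix.

Lemma fpow_aux_structure (C : comNzRingType) (e n : nat)
    (A : 'M[C]_((Zp_trunc e).+2)) (f : 'Z_e -> C) :
  structure_mx A f -> structure_mx (mpow_aux n A) (fpow_aux n f).
Proof. by move=> hf; elim: n => [//|n IH]; apply: fconv_structure. Qed.

Local Open Scope complex_scope.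

Theorem proposition3p5 (R : realType) (K : divringClosed R[i]) (e : nat)
  (he : (2 <= e)%N) (f g : 'Z_e -> R[i]) (A B : 'M[R[i]]_((Zp_trunc e).+2)) :
  A \is a mxOver K -> B \is a mxOver K ->
  (forall i j : 'Z_e, f i * f j = \sum_(k : 'Z_e) A (j - i) (k - i) * f k) ->
  (forall i j : 'Z_e, g i * g j = \sum_(k : 'Z_e) B (j - i) (k - i) * g k) ->
  (forall d : 'Z_e, d != 0 -> forall i j : 'Z_e,
     fconv d f g i * fconv d f g j
     = \sum_(k : 'Z_e) mconv d A B (j - i) (k - i) * fconv d f g k)
  /\
  (forall n : nat, (1 <= n)%N -> forall i j : 'Z_e,
     fpow n f i * fpow n f j = \sum_(k : 'Z_e) mpow n A (j - i) (k - i) * fpow n f k).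
Proof.
move=> _ _ hf hg; split.
- by move=> d _; apply: fconv_structure.
- by case=> [//|n] _; apply: fpow_aux_structure.
Qed.
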